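(* For every $T_1,T_2\in\mathcal{T}_n$, if $\pi(T_1)=\pi(T_2)$ in $\mathfrak{S}_{2n-2}$, then $T_1=T_2$.
   Context: A phylogenetic tree is a finite rooted tree (arcs directed away from the root) with no node of outdegree $1$, whose leaves are injectively labeled. $\mathcal{T}_n$ denotes the set of phylogenetic trees with $n$ leaves labeled $1,\dots,n$, up to label-preserving isomorphism. Internal nodes are the non-leaf nodes; $\mathcal{L}(T)$ is the set of leaves. The height of a node is the length of a longest directed path from it to a leaf. The bottom-up ordering of $T=(V,E)\in\mathcal{T}_n$ is the unique injective map $\ell:V\to\{1,\dots,|V|\}$ such that: (a) for a leaf $v$, $\ell(v)$ is its label; (b) if $\mathrm{height}(u)<\mathrm{height}(v)$ then $\ell(u)<\ell(v)$; (c) if $0<\mathrm{height}(u)=\mathrm{height}(v)$ and $\min\{\ell(x): x \text{ child of } u\}<\min\{\ell(x): x\text{ child of } v\}$ then $\ell(u)<\ell(v)$. For a subset $S=\{i_1<\dots<i_k\}$ with $k\ge 2$, $\kappa(S)$ is the cyclic permutation $(i_1,i_2,\dots,i_k)$ sending $i_1\mapsto i_2\mapsto\dots\mapsto i_k\mapsto i_1$. The matching permutation of $T$ is $\pi(T)=\prod_{u\in V\setminus\mathcal{L}(T)}\kappa(\ell(\mathrm{children}(u)))$ (a product of disjoint cycles), regarded as an element of the symmetric group $\mathfrak{S}_{2n-2}$ fixing $|V|,\dots,2n-2$. *)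

From mathcomp Require Import all_boot.
Set Implicit Arguments. Unset Strict Implicit. Unset Printing Implicit Defensive.

(* A rooted tree on the vertex set 'I_N is given by its parent map
   (arcs directed away from the root: par c = Some u iff (u,c) is an arc). *)
Definition children (N : nat) (par : 'I_N -> option 'I_N) (u : 'I_N) : {set 'I_N} :=
  [set c | par c == Some u].

Definition is_leaf (N : nat) (par : 'I_N -> option 'I_N) (v : 'I_N) : bool :=
  children par v == set0.

(* par describes a finite rooted tree, no node has outdegree 1, and
   leaf : 'I_n -> 'I_N is a bijection from labels onto the leaves
   (label i : 'I_n stands for the paper's label i+1). *)
Definition is_phylo (n N : nat) (par : 'I_N -> option 'I_N) (leaf : 'I_n -> 'I_N) : Prop :=
  [/\ #|[set v | par v == None]| = 1,
      (forall v : 'I_N, iter N (fun o => obind par o) (Some v) = None),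
      (forall u : 'I_N, #|children par u| != 1),
      injective leaf &
      (forall v : 'I_N, is_leaf par v <-> exists i, v = leaf i)].

Record ptree (n : nat) : Type := PTree {
  nv : nat;
  par : 'I_nv -> option 'I_nv;
  leaf : 'I_n -> 'I_nv;
  ptree_ok : is_phylo par leaf }.
Arguments nv {n} _.
Arguments par {n} _ _.
Arguments leaf {n} _ _.

(* label-preserving isomorphism: the paper's equality in T_n *)
Definition ptree_iso (n : nat) (T1 T2 : ptree n) : Prop :=
  exists f : 'I_(nv T1) -> 'I_(nv T2),
    [/\ bijective f,
        (forall v, par T2 (f v) = omap f (par T1 v)) &
        (forall i, f (leaf T1 i) = leaf T2 i)].

(* height = length of a longest directed path to a leaf (fuel N suffices) *)
Fixpoint hgt_aux (N : nat) (par : 'I_N -> option 'I_N) (k : nat) (v : 'I_N) : nat :=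
  match k with
  | 0 => 0
  | k'.+1 => \max_(c in children par v) (hgt_aux par k' c).+1
  end.

Definition height (n : nat) (T : ptree n) (v : 'I_(nv T)) : nat :=
  hgt_aux (par T) (nv T) v.

Definition min_child (n : nat) (T : ptree n) (l : 'I_(nv T) -> nat) (u : 'I_(nv T)) : nat :=
  \big[minn/(nv T).+1]_(c in children (par T) u) l c.

Definition bottom_up (n : nat) (T : ptree n) (l : 'I_(nv T) -> nat) : Prop :=
  [/\ injective l,
      (forall v, 1 <= l v <= nv T),
      (forall i : 'I_n, l (leaf T i) = i.+1),
      (forall u v, height u < height v -> l u < l v) &
      (forall u v, 0 < height u -> height u = height v ->
                   min_child l u < min_child l v -> l u < l v)].

(* matching permutation pi(T) = prod over internal u of kappa(l(children u)),
   as a function on nat: k = l(v) with parent u is sent to the cyclic successor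
   of k in the increasingly sorted list of l(children u); other k are fixed. *)
Definition match_perm (n : nat) (T : ptree n) (l : 'I_(nv T) -> nat) (k : nat) : nat :=
  match [pick v | l v == k] with
  | Some v =>
      match par T v with
      | Some u => next (sort leq [seq l c | c <- enum (children (par T) u)]) k
      | None => k
      end
  | None => k
  end.

(* A bottom-up ordering is a bijection onto {1, ..., |V|} that increases towards
   the root, so the root is labelled |V| <= 2n - 1 and every other vertex gets a
   label <= 2n - 2.  On these labels the cycles of pi(T) are exactly the sibling
   sets, and |V| is the only fixed point of pi(T) in {1, ..., |V|}.  Hence two
   trees with the same matching permutation have the same number of vertices,
   and identifying vertices with equal labels sends sibling sets to sibling
   sets.  Each sibling set then has the same parent in both trees, by induction
   on the parent's label: below the current label the trees agree, so the
   heights agree, and in both trees the remaining parents are ordered by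
   (height, smallest child label), which leaves no room for a mismatch. *)

From mathcomp Require Import all_boot zify.
Set Implicit Arguments. Unset Strict Implicit. Unset Printing Implicit Defensive.

Lemma iter_next_nth (T : eqType) (x : T) s j : uniq (x :: s) -> j < size (x :: s) ->
  iter j (next (x :: s)) x = nth x (x :: s) j.
Proof.
elim: j => [//|j IH] U Hj.
by rewrite iterS IH ?(ltnW Hj) // next_nth mem_nth ?(ltnW Hj) // index_uniq ?(ltnW Hj).
Qed.

Lemma iter_next_connect (T : eqType) (s : seq T) x y : uniq s -> x \in s -> y \in s ->
  exists i, iter i (next s) x = y.
Proof.
move=> Us /rot_to[i s' Ds] sy.
have Us' : uniq (x :: s') by rewrite -Ds rot_uniq.
have s'y : y \in x :: s' by rewrite -Ds mem_rot.
exists (index y (x :: s')).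
rewrite (eq_iter (f' := next (x :: s'))) ?iter_next_nth ?index_mem ?nth_index //.
by move=> z; rewrite -Ds next_rot.
Qed.

Lemma hgt_aux_succ N (p : 'I_N -> option 'I_N) k v :
  hgt_aux p k.+1 v = \max_(c in children p v) (hgt_aux p k c).+1.
Proof. by []. Qed.

Lemma hgt_aux_mono N (p : 'I_N -> option 'I_N) k v : hgt_aux p k v <= hgt_aux p k.+1 v.
Proof.
elim: k v => [|k IH] v //=; apply/bigmax_leqP => c Hc.
by apply: leq_trans (leq_bigmax_cond _ Hc); rewrite ltnS IH.
Qed.

Lemma hgt_aux_growth_chain N (p : 'I_N -> option 'I_N) k v :
  hgt_aux p k v < hgt_aux p k.+1 v -> exists w, iter k.+1 (obind p) (Some w) = Some v.
Proof.
elim: k v => [|k IH] v lt_v.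
  have [c] : exists c, c \in children p v.
    by apply/set0Pn; apply: contraTneq lt_v => /= ->; rewrite big_set0.
  by rewrite inE => /eqP pc; exists c; rewrite /= pc.
have lt_max := lt_v; rewrite hgt_aux_succ [X in _ < X]hgt_aux_succ in lt_max.
have A0 : 0 < #|children p v|.
  by rewrite card_gt0; apply: contraTneq lt_max => ->; rewrite !big_set0.
have [c cv Ec] := eq_bigmax_cond (fun c => (hgt_aux p k.+1 c).+1) A0.
have lt_c : hgt_aux p k c < hgt_aux p k.+1 c.
  rewrite -ltnS -Ec.
  exact: leq_ltn_trans (leq_bigmax_cond (F := fun c => (hgt_aux p k c).+1) _ cv) lt_max.
have [w Hw] := IH c lt_c; exists w.
by rewrite iterS Hw /=; move: cv; rewrite inE => /eqP.
Qed.

Lemma hgt_aux_stable N (p : 'I_N -> option 'I_N) k v :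
  (forall w, iter k.+1 (obind p) (Some w) = None) -> hgt_aux p k.+1 v = hgt_aux p k v.
Proof.
move=> acyclic; apply/eqP; rewrite eqn_leq hgt_aux_mono andbT leqNgt.
by apply/negP => /hgt_aux_growth_chain[w]; rewrite acyclic.
Qed.

Lemma bigmin_le_cond (I : eqType) (r : seq I) (P : pred I) (F : I -> nat) x i :
  i \in r -> P i -> \big[minn/x]_(j <- r | P j) F j <= F i.
Proof.
elim: r => // j r IH; rewrite inE big_cons => /predU1P[<-|ri] Pi; first by rewrite Pi geq_minl.
by case: (P j); rewrite ?geq_min IH ?orbT.
Qed.

Lemma sum_card_children N (p : 'I_N -> option 'I_N) :
  \sum_u #|children p u| = #|[set v | p v != None]|.
Proof.
transitivity (\sum_u \sum_c (p c == Some u : nat)).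
  by apply: eq_bigr => u _; rewrite -sum1_card big_mkcond; apply: eq_bigr => c _; rewrite inE.
rewrite exchange_big -sum1_card [RHS]big_mkcond; apply: eq_bigr => c _ /=; rewrite inE.
case: (p c) => [u|] /=; last by rewrite big1.
by rewrite (bigD1 u) //= eqxx big1 // => w wu; case: eqP => // -[E]; rewrite E eqxx in wu.
Qed.

Section Tree.
Variables (n : nat) (T : ptree n).
Local Notation p := (par T).

Lemma root_uniq r r' : p r = None -> p r' = None -> r = r'.
Proof.
case: (ptree_ok T) => /eqP/cards1P[r0 Er0] _ _ _ _ pr pr'.
have : r \in [set v | p v == None] by rewrite inE pr.
have : r' \in [set v | p v == None] by rewrite inE pr'.
by rewrite Er0 !inE => /eqP -> /eqP ->.
Qed.

Lemma exists_root : exists r, p r = None.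
Proof.
case: (ptree_ok T) => /eqP/cards1P[r Er] _ _ _ _; exists r.
have : r \in [set v | p v == None] by rewrite Er set11.
by rewrite inE => /eqP.
Qed.

Lemma nv_gt0 : 0 < nv T.
Proof. by have [r _] := exists_root; apply: leq_ltn_trans (ltn_ord r). Qed.

Lemma is_leafPn u : reflect (exists c, p c = Some u) (~~ is_leaf p u).
Proof.
apply: (iffP (set0Pn (children p u))) => [[c]|[c pc]]; last by exists c; rewrite inE pc.
by rewrite inE => /eqP; exists c.
Qed.

Lemma exists_sibling v u : p v = Some u -> exists2 w, p w = Some u & w != v.
Proof.
move=> pv; case: (ptree_ok T) => _ _ /(_ u) card_neq1 _ _.
have : 0 < #|children p u :\ v|.
  rewrite lt0n; apply/eqP => D0.
  by move: card_neq1; rewrite (cardsD1 v) D0 inE pv eqxx.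
by case/card_gt0P => w; rewrite !inE => /andP[wv /eqP pw]; exists w.
Qed.

Lemma height_children u : height u = \max_(c in children p u) (height c).+1.
Proof.
have Esucc := prednK nv_gt0.
have acyclic w : iter (nv T).-1.+1 (obind p) (Some w) = None.
  by rewrite Esucc; case: (ptree_ok T) => _ ->.
rewrite /height; transitivity (hgt_aux p (nv T).-1.+1 u); first by rewrite Esucc.
rewrite hgt_aux_succ; apply: eq_bigr => c _.
by rewrite -(hgt_aux_stable _ acyclic) Esucc.
Qed.

Lemma height_par c u : p c = Some u -> height c < height u.
Proof.
move=> pc; rewrite (height_children u).
by apply: (leq_bigmax_cond (F := fun c => (height c).+1)); rewrite inE pc.
Qed.

Lemma nv_lt_double : nv T < 2 * n.
Proof.
case: (ptree_ok T) => root1 _ card_neq1 leaf_inj leafP.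
set L := [set v | is_leaf p v].
have cardL : #|L| = n.
  have -> : L = [set leaf T i | i in 'I_n].
    by apply/setP => v; rewrite !inE; apply/idP/imsetP => [/leafP[i ->]|[i _ ->]];
      [exists i | apply/leafP; exists i].
  by rewrite card_imset ?card_ord.
have cardR : #|[set v | p v != None]| = (nv T).-1.
  have := cardsC [set v | p v == None]; rewrite root1 card_ord.
  have -> : ~: [set v | p v == None] = [set v | p v != None] by apply/setP => v; rewrite !inE.
  lia.
have internal2 : \sum_(u in ~: L) 2 <= \sum_u #|children p u|.
  rewrite [X in _ <= X](bigID (mem L)) /=; apply: leq_trans (leq_addl _ _).
  rewrite [X in _ <= X](eq_bigl (fun u => u \in ~: L)) => [|u]; last by rewrite in_setC.
  apply: leq_sum => u; rewrite !inE /is_leaf -card_gt0 => pos.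
  by rewrite ltn_neqAle eq_sym card_neq1.
move: internal2; rewrite sum_card_children cardR sum_nat_const.
have := cardsC L; rewrite card_ord cardL; have := nv_gt0; lia.
Qed.

Variables (l : 'I_(nv T) -> nat) (Hl : bottom_up l).
Local Notation pi := (match_perm l).

Lemma label_inj : injective l. Proof. by case: Hl. Qed.

Lemma label_range v : 0 < l v <= nv T. Proof. by case: Hl. Qed.

Lemma label_leaf i : l (leaf T i) = i.+1. Proof. by case: Hl. Qed.

Lemma label_surj k : 0 < k <= nv T -> exists v, l v = k.
Proof.
move=> k_range; set s := [seq l v | v <- enum 'I_(nv T)].
have s_uniq : uniq s by rewrite map_inj_uniq ?enum_uniq //; apply: label_inj.
have s_sub : {subset s <= iota 1 (nv T)}.
  by move=> x /mapP[v _ ->]; rewrite mem_iota; have := label_range v; lia.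
have [|_ Es] := uniq_min_size s_uniq s_sub; first by rewrite size_iota size_map size_enum_ord.
have : k \in s by rewrite Es mem_iota; lia.
by case/mapP => v _ ->; exists v.
Qed.

Lemma label_par c u : p c = Some u -> l c < l u.
Proof. by case: Hl => _ _ _ height_lt _ /height_par /height_lt. Qed.

Lemma rootE v : (p v == None) = (l v == nv T).
Proof.
have [w lw] : exists w, l w = nv T by apply: label_surj; rewrite leqnn nv_gt0.
have pw : p w = None.
  by case E: (p w) => [u|] //; have := label_par E; have := label_range u; lia.
apply/eqP/eqP => [pv|lv]; first by rewrite (root_uniq pv pw).
by rewrite (label_inj (etrans lv (esym lw))).
Qed.

Lemma is_leaf_label v : is_leaf p v = (l v <= n).
Proof.
case: (ptree_ok T) => _ _ _ _ leafP; apply/idP/idP => [/leafP[i ->]|le_vn].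
  by rewrite label_leaf.
apply/leafP; have := label_range v; case E: (l v) => [//|k] _.
have lt_kn : k < n by rewrite E in le_vn.
by exists (Ordinal lt_kn); apply: label_inj; rewrite label_leaf E.
Qed.

Lemma label_lt_height u v : l u < l v -> height u <= height v.
Proof.
case: Hl => _ _ _ height_lt _ lt_uv; rewrite leqNgt.
by apply/negP => /height_lt; rewrite ltnNge (ltnW lt_uv).
Qed.

Lemma label_lt_min_child u v : l u < l v -> 0 < height u -> height u = height v ->
  min_child l u <= min_child l v.
Proof.
case: Hl => _ _ _ _ min_child_lt lt_uv hu0 huv; rewrite leqNgt.
apply/negP => /(min_child_lt v u); rewrite -huv => /(_ hu0 erefl).
by rewrite ltnNge (ltnW lt_uv).
Qed.

Lemma min_child_le c u : p c = Some u -> min_child l u <= l c.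
Proof. by move=> pc; apply: bigmin_le_cond; rewrite ?mem_index_enum ?inE ?pc. Qed.

Lemma min_child_attained u : ~~ is_leaf p u ->
  exists2 b, p b = Some u & l b = min_child l u.
Proof.
case/is_leafPn => c0 pc0.
have : min_child l u = (nv T).+1 \/ exists2 b, p b = Some u & l b = min_child l u.
  rewrite /min_child.
  apply: (big_ind (fun m => m = (nv T).+1 \/ exists2 b, p b = Some u & l b = m))
    => [|x y Kx Ky|b]; first by left.
    by rewrite /minn; case: ltnP.
  by rewrite inE => /eqP pb; right; exists b.
case=> // min_top; have := min_child_le pc0; have := label_range c0; lia.
Qed.

Lemma min_child_inj u w : ~~ is_leaf p u -> ~~ is_leaf p w ->
  min_child l u = min_child l w -> u = w.
Proof.
move=> /min_child_attained[b pb lb] /min_child_attained[b' pb' lb'] E.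
by move: pb'; rewrite -(label_inj (etrans lb (etrans E (esym lb')))) pb => -[].
Qed.

Definition child_labels u := sort leq [seq l c | c <- enum (children p u)].

Lemma child_labels_uniq u : uniq (child_labels u).
Proof. by rewrite sort_uniq map_inj_uniq ?enum_uniq //; apply: label_inj. Qed.

Lemma mem_child_labels u c : (l c \in child_labels u) = (p c == Some u).
Proof. by rewrite mem_sort (mem_map label_inj) mem_enum inE. Qed.

Lemma child_labelsP u x : x \in child_labels u -> exists2 c, p c = Some u & x = l c.
Proof. by rewrite mem_sort => /mapP[c]; rewrite mem_enum inE => /eqP; exists c. Qed.

Lemma match_perm_label v :
  pi (l v) = if p v is Some u then next (child_labels u) (l v) else l v.
Proof.
rewrite /match_perm; case: pickP => [w /eqP/label_inj -> // | /(_ v)].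
by rewrite eqxx.
Qed.

Lemma match_perm_child_labels u x : x \in child_labels u -> pi x = next (child_labels u) x.
Proof. by case/child_labelsP => c pc ->; rewrite match_perm_label pc. Qed.

Lemma mem_iter_match_perm u x i : x \in child_labels u -> iter i pi x \in child_labels u.
Proof. by apply: iter_in => y y_u; rewrite (match_perm_child_labels y_u) mem_next. Qed.

Lemma iter_match_perm_next u x i : x \in child_labels u ->
  iter i pi x = iter i (next (child_labels u)) x.
Proof.
move=> x_u; elim: i => //= i ->; apply: match_perm_child_labels.
by apply: iter_in x_u => y; rewrite mem_next.
Qed.

Lemma siblings_orbit v w u : p v = Some u ->
  p w = Some u <-> exists i, iter i pi (l v) = l w.
Proof.
move=> pv; have v_u : l v \in child_labels u by rewrite mem_child_labels pv.
split=> [pw | [i Ei]].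
  have w_u : l w \in child_labels u by rewrite mem_child_labels pw.
  have [i Ei] := iter_next_connect (child_labels_uniq u) v_u w_u.
  by exists i; rewrite (iter_match_perm_next _ v_u).
by apply/eqP; rewrite -mem_child_labels -Ei mem_iter_match_perm.
Qed.

Lemma child_label_lt_nv u x : x \in child_labels u -> 0 < x < nv T.
Proof.
case/child_labelsP => c pc ->; move: (rootE c); rewrite pc => /esym/negbT.
by have := label_range c; lia.
Qed.

Lemma match_perm_fixed k : 0 < k <= nv T -> (pi k == k) = (k == nv T).
Proof.
case/label_surj => v <-{k}; rewrite -rootE.
case pv: (p v) => [u|] /=; last by rewrite match_perm_label pv !eqxx.
have [w pw wv] := exists_sibling pv.
apply/negP => /eqP fixv; move: wv; have [i] := (siblings_orbit w pv).1 pw.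
by rewrite (iter_fix _ fixv) => /label_inj ->; rewrite eqxx.
Qed.

End Tree.

Lemma label_transport n (T1 T2 : ptree n) (l1 : 'I_(nv T1) -> nat) (l2 : 'I_(nv T2) -> nat) :
  bottom_up l1 -> bottom_up l2 -> nv T1 = nv T2 ->
  exists2 f : 'I_(nv T1) -> 'I_(nv T2), bijective f & forall v, l2 (f v) = l1 v.
Proof.
move=> Hl1 Hl2 EN.
have /fin_all_exists[f Ef] : forall v : 'I_(nv T1), exists w, l2 w = l1 v.
  by move=> v; apply: (label_surj Hl2); rewrite -EN label_range.
exists f => //; apply: inj_card_bij; last by rewrite !card_ord EN.
by move=> v w E; apply: (label_inj Hl1); rewrite -!Ef E.
Qed.

Section SameMatchingPermutation.
Variables (n : nat) (T1 T2 : ptree n).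
Variables (l1 : 'I_(nv T1) -> nat) (l2 : 'I_(nv T2) -> nat).
Hypotheses (Hl1 : bottom_up l1) (Hl2 : bottom_up l2).
Hypothesis same_pi :
  forall k, 1 <= k <= (2 * n - 2)%N -> match_perm l1 k = match_perm l2 k.

Lemma iter_match_perm_agree u x i : x \in child_labels l1 u ->
  iter i (match_perm l1) x = iter i (match_perm l2) x.
Proof.
move=> x_u; elim: i => //= i <-; apply: same_pi.
have := child_label_lt_nv Hl1 (mem_iter_match_perm Hl1 i x_u).
by have := nv_lt_double T1; lia.
Qed.

Lemma nv_le : nv T1 <= nv T2.
Proof.
rewrite leqNgt; apply/negP => lt21.
have fix2 : match_perm l2 (nv T2) = nv T2.
  by apply/eqP; rewrite (match_perm_fixed Hl2) // nv_gt0 leqnn.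
have : match_perm l1 (nv T2) == nv T2.
  by rewrite same_pi ?fix2 //; have := nv_lt_double T1; have := nv_gt0 T2; lia.
by rewrite (match_perm_fixed Hl1) ?(ltn_eqF lt21) ?nv_gt0 ?(ltnW lt21).
Qed.

Variable f : 'I_(nv T1) -> 'I_(nv T2).
Hypotheses (f_bij : bijective f) (label_f : forall v, l2 (f v) = l1 v).
Local Notation p1 := (par T1).
Local Notation p2 := (par T2).

Definition matched u u' := forall c, p1 c = Some u <-> p2 (f c) = Some u'.

Lemma f_root v : (p2 (f v) == None) = (p1 v == None).
Proof.
have nv_eq : nv T1 = nv T2 by rewrite -(card_ord (nv T1)) (bij_eq_card f_bij) card_ord.
by rewrite (rootE Hl1) (rootE Hl2) label_f nv_eq.
Qed.

Lemma f_leaf v : is_leaf p2 (f v) = is_leaf p1 v.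
Proof. by rewrite (is_leaf_label Hl1) (is_leaf_label Hl2) label_f. Qed.

Lemma matched_par c0 u u' : p1 c0 = Some u -> p2 (f c0) = Some u' -> matched u u'.
Proof.
move=> pc0 pfc0 c.
have c0_u : l1 c0 \in child_labels l1 u by rewrite (mem_child_labels Hl1) pc0.
have agree i := iter_match_perm_agree i c0_u.
split=> [/(siblings_orbit Hl1 c pc0)[i Ei] | /(siblings_orbit Hl2 (f c) pfc0)[i Ei]].
  by apply/(siblings_orbit Hl2 (f c) pfc0); exists i; rewrite !label_f -agree.
by apply/(siblings_orbit Hl1 c pc0); exists i; rewrite agree -!label_f.
Qed.

Lemma exists_matched u : ~~ is_leaf p1 u -> exists u', matched u u'.
Proof.
case/is_leafPn => c pc; case pfc: (p2 (f c)) => [u'|].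
  by exists u'; apply: matched_par pfc.
by move/eqP: pfc; rewrite f_root pc.
Qed.

Lemma exists_matched_inv u' : ~~ is_leaf p2 u' -> exists u, matched u u'.
Proof.
have [g _ gK] := f_bij; case/is_leafPn => d; rewrite -[d]gK => pd.
case pc: (p1 (g d)) => [u|]; first by exists u; apply: matched_par pd.
by move/eqP: pc; rewrite -f_root pd.
Qed.

Lemma matched_leaf u u' : matched u u' -> is_leaf p2 u' = is_leaf p1 u.
Proof.
have [g _ gK] := f_bij; move=> m.
apply: negb_inj; apply/idP/idP => /is_leafPn[c pc]; apply/is_leafPn.
  by exists (g c); apply/m; rewrite gK.
by exists (f c); apply/m.
Qed.

Lemma matched_leaves u u' : is_leaf p1 u -> is_leaf p2 u' -> matched u u'.
Proof.
move=> lu lu' c; split=> pc.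
  have /is_leafPn : exists c, p1 c = Some u by exists c.
  by rewrite lu.
have /is_leafPn : exists d, p2 d = Some u' by exists (f c).
by rewrite lu'.
Qed.

Lemma matched_inj_l u w u' : ~~ is_leaf p1 u -> matched u u' -> matched w u' -> w = u.
Proof. by case/is_leafPn => c pc mu mw; have := (mw c).2 ((mu c).1 pc); rewrite pc => -[]. Qed.

Lemma matched_inj_r u u' u'' : ~~ is_leaf p1 u -> matched u u' -> matched u u'' -> u'' = u'.
Proof. by case/is_leafPn => c pc mu mu'; have := (mu c).1 pc; rewrite (mu' c).1 // => -[]. Qed.

Lemma height_matched u u' : matched u u' ->
  (forall c, p1 c = Some u -> height (f c) = height c) -> height u' = height u.
Proof.
move=> m hc; rewrite !height_children (reindex f) /=; last exact: onW_bij.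
apply: eq_big => c; first by rewrite !inE; apply/eqP/eqP => /m.
by rewrite inE => /eqP/(m c)/hc ->.
Qed.

Lemma min_child_matched u u' : ~~ is_leaf p1 u -> matched u u' ->
  min_child l2 u' = min_child l1 u.
Proof.
move=> iu m; have iu' : ~~ is_leaf p2 u' by rewrite (matched_leaf m).
have [b pb lb] := min_child_attained Hl1 iu.
have [d pd ld] := min_child_attained Hl2 iu'.
have [g _ gK] := f_bij.
have le12 : min_child l2 u' <= min_child l1 u.
  by rewrite -lb -label_f; apply: (min_child_le l2); apply/m.
have le21 : min_child l1 u <= min_child l2 u'.
  by rewrite -ld -[d]gK label_f; apply: (min_child_le l1); apply/m; rewrite gK.
by apply/eqP; rewrite eqn_leq le12 le21.
Qed.

Lemma height_f m : (forall v, l1 v < m -> matched v (f v)) ->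
  forall x, l1 x < m -> height (f x) = height x.
Proof.
move=> IH x; have [k] := ubnP (l1 x); elim: k x => // k IHk x lt_xk lt_xm.
apply: height_matched (IH x lt_xm) _ => c /(label_par Hl1) lt_cx.
by apply: IHk; lia.
Qed.

Lemma matched_below u v v' : (forall w, l1 w < l1 u -> matched w (f w)) ->
  ~~ is_leaf p1 v -> matched v v' -> l1 v < l1 u \/ l2 v' < l1 u -> v' = f v.
Proof.
have [g _ gK] := f_bij; move=> IH iv m [lt_v | lt_v'].
  exact: matched_inj_r iv (IH v lt_v) m.
have mg : matched (g v') v' by have := IH (g v'); rewrite -label_f gK; apply.
by rewrite -{1}(gK v') (matched_inj_l iv m mg).
Qed.

(* u' and w are the partners of u and f u; if both lie above u, then T1 and T2 order
   the keys (height, smallest child label) of u and w oppositely, so the keys agree. *)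
Lemma matched_cross u u' w : (forall x, l1 x < l1 u -> height (f x) = height x) ->
  ~~ is_leaf p1 u -> matched u u' -> matched w (f u) ->
  l1 u < l1 w -> l1 u < l2 u' -> w = u.
Proof.
move=> hf iu mu mw lt_uw lt_uu'.
have iw : ~~ is_leaf p1 w by rewrite -(matched_leaf mw) f_leaf.
have hu : height u' = height u.
  by apply: (height_matched mu) => c /(label_par Hl1) /hf.
have hw : height (f u) = height w.
  apply: (height_matched mw) => c /(mw c) /(label_par Hl2).
  by rewrite !label_f => /hf.
have hu0 : 0 < height u by case/is_leafPn: iu => c /height_par; apply: leq_ltn_trans.
have h_eq : height u = height w.
  apply/eqP; rewrite eqn_leq (label_lt_height Hl1 lt_uw) -hu -hw.
  by apply: (label_lt_height Hl2); rewrite label_f.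
have le_uw := label_lt_min_child Hl1 lt_uw hu0 h_eq.
have le_wu : min_child l1 w <= min_child l1 u.
  rewrite -(min_child_matched iw mw) -(min_child_matched iu mu).
  by apply: (label_lt_min_child Hl2); rewrite ?label_f ?hw ?hu -?h_eq.
by apply: (min_child_inj Hl1 iw iu); apply/eqP; rewrite eqn_leq le_wu le_uw.
Qed.

Lemma matched_f_step u : (forall v, l1 v < l1 u -> matched v (f v)) -> matched u (f u).
Proof.
move=> IH; have [lu|iu] := boolP (is_leaf p1 u).
  by apply: matched_leaves; rewrite ?f_leaf.
have [u' mu] := exists_matched iu.
have [w mw] : exists w, matched w (f u) by apply: exists_matched_inv; rewrite f_leaf.
have [Ewu | ne_wu] := eqVneq w u; first by rewrite Ewu in mw.
have [Eu' | ne_u'] := eqVneq (f u) u'; first by rewrite Eu'.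
have iw : ~~ is_leaf p1 w by rewrite -(matched_leaf mw) f_leaf.
have lt_uw : l1 u < l1 w.
  case: ltngtP => // [lt_wu | /(label_inj Hl1) E]; last by rewrite E eqxx in ne_wu.
  have /(bij_inj f_bij) E := matched_below IH iw mw (or_introl lt_wu).
  by rewrite E eqxx in ne_wu.
have lt_uu' : l1 u < l2 u'.
  case: ltngtP => // [lt_u' | ].
    by have E := matched_below IH iu mu (or_intror lt_u'); rewrite E eqxx in ne_u'.
  by rewrite -label_f => /(label_inj Hl2) E; rewrite E eqxx in ne_u'.
by case/eqP: ne_wu; apply: matched_cross (height_f IH) iu mu mw lt_uw lt_uu'.
Qed.

Lemma matched_f u : matched u (f u).
Proof.
have [k] := ubnP (l1 u); elim: k u => // k IH u lt_uk.
by apply: matched_f_step => v lt_vu; apply: IH; lia.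
Qed.

End SameMatchingPermutation.

Theorem proposition1 (n : nat) (T1 T2 : ptree n)
    (l1 : 'I_(nv T1) -> nat) (l2 : 'I_(nv T2) -> nat) :
  bottom_up l1 -> bottom_up l2 ->
  (forall k, 1 <= k <= (2 * n - 2)%N -> match_perm l1 k = match_perm l2 k) ->
  ptree_iso T1 T2.
Proof.
move=> Hl1 Hl2 same_pi.
have same_pi' k : 1 <= k <= (2 * n - 2)%N -> match_perm l2 k = match_perm l1 k.
  by move/same_pi.
have nv_eq : nv T1 = nv T2.
  by apply/eqP; rewrite eqn_leq (nv_le Hl1 Hl2 same_pi) (nv_le Hl2 Hl1 same_pi').
have [f f_bij label_f] := label_transport Hl1 Hl2 nv_eq.
exists f; split=> // [v | i].
  case pv: (par T1 v) => [u|] /=; first exact/(matched_f Hl1 Hl2 same_pi f_bij label_f).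
  by apply/eqP; rewrite (f_root Hl1 Hl2 f_bij label_f) pv.
by apply: (label_inj Hl2); rewrite label_f !label_leaf.
Qed.
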